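(* Let $A$ be a torsion-free abelian group and $p$ a prime. Then $A$ has a homomorphic image isomorphic to $\bigoplus_{\aleph_0}\mathbb{Z}(p^\infty)$ (a direct sum of countably infinitely many copies of $\mathbb{Z}(p^\infty)$) if and only if $A$ has infinite (torsion-free) rank.
   Context: All groups are abelian; $\mathbb{Z}(p^\infty)$ is the quasi-cyclic $p$-group. *)

From HB Require Import structures.
From mathcomp Require Import all_boot all_order all_algebra archimedean.
From mathcomp Require Import ring_quotient.
From mathcomp Require Import boolp.
Set Implicit Arguments. Unset Strict Implicit. Unset Printing Implicit Defensive.
Import Order.TTheory GRing.Theory Num.Theory.
Local Open Scope ring_scope.

Definition torsion_free (A : zmodType) : Prop :=
  forall (x : A) (n : nat), x *+ n.+1 = 0 -> x = 0.

Definition zindependent (A : zmodType) (n : nat) (x : 'I_n -> A) : Prop :=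
  forall c : 'I_n -> int, \sum_(i < n) x i *~ c i = 0 -> forall i, c i = 0.

(* Infinite (torsion-free) rank: a maximal independent set is infinite,
   equivalently there are independent families of every finite size. *)
Definition infinite_rank (A : zmodType) : Prop :=
  forall n : nat, exists x : 'I_n -> A, zindependent x.

(* Finitely supported sequences of rationals (indexed by nat) are modelled
   by {poly rat}: the coefficient sequence of a polynomial.  The integer
   polynomials form the subgroup Z^(N).  Their quotient is the direct sum
   of countably many copies of Q/Z. *)
Definition int_poly_pred : {pred {poly rat}} :=
  fun q => q \is a polyOver (@Num.int rat).
Lemma int_poly_zmod : zmod_closed int_poly_pred.
Proof.
split; first exact: polyOver0.
move=> x y /polyOverP hx /polyOverP hy; apply/polyOverP => i.
by rewrite coefB rpredB.
Qed.
HB.instance Definition _ := GRing.isZmodClosed.Build _ int_poly_pred int_poly_zmod.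
Definition int_poly : zmodClosed {poly rat} := GRing.ZmodClosed.clone _ int_poly_pred _.
Definition QZsum := Quotient.quot int_poly.
(* The p-primary component of (+)_N Q/Z, i.e. (+)_N Z(p^oo) where
   Z(p^oo) is the p-primary component of Q/Z (the quasi-cyclic p-group). *)
Section Ptors.
Variable p : nat.
Definition ptorsion_pred : {pred QZsum} :=
  fun x => `[< exists k : nat, x *+ (p ^ k) = 0 >].
Lemma ptorsion_zmod : zmod_closed ptorsion_pred.
Proof.
split; first by apply/asboolP; exists 0%N; rewrite mul0rn.
move=> x y /asboolP [a ha] /asboolP [b hb]; apply/asboolP; exists (a + b)%N.
rewrite mulrnBl expnD mulrnA ha mul0rn mulnC mulrnA hb mul0rn.
by rewrite subr0.
Qed.
HB.instance Definition _ := GRing.isZmodClosed.Build _ ptorsion_pred ptorsion_zmod.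
Record Zpinf_sum := ZpinfSum { zpval : QZsum; _ : ptorsion_pred zpval }.
HB.instance Definition _ := [isSub for zpval].
HB.instance Definition _ := [Choice of Zpinf_sum by <:].
HB.instance Definition _ := [SubChoice_isSubZmodule of Zpinf_sum by <:].
End Ptors.

Definition has_Zpinf_sum_image (A : zmodType) (p : nat) : Prop :=
  exists f : {additive A -> Zpinf_sum p}, forall y, exists x, f x = y.

(* If f : A -> (+)_N Z(p^oo) is onto, lift the elements 1/p of the first n
   summands to a_0, ..., a_(n-1) in A.  Since A is torsion-free, a nontrivial
   relation among the a_i can be divided by the gcd of its coefficients, so that
   some coefficient is prime to p; but its image under f is a relation among
   the 1/p's of distinct summands, which forces every coefficient to be
   divisible by p.  Hence A has infinite rank.

   Conversely, as k + 1 vectors of Q^k are dependent, independent families of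
   every finite size allow any finite independent family of A to be enlarged,
   which yields an independent sequence x_0, x_1, ...  Sending the x_j onto an
   enumeration of the generators p^-k of the summands defines a homomorphism on
   the free subgroup they span; it extends to A because (+)_N Z(p^oo) is
   divisible (Baer's argument, via Zorn's lemma), and the extension is onto. *)

From HB Require Import structures.
From mathcomp Require Import all_boot all_order all_algebra.
From mathcomp Require Import generic_quotient ring_quotient boolp classical_sets.
Set Implicit Arguments. Unset Strict Implicit. Unset Printing Implicit Defensive.
Import GRing.Theory Num.Theory.
Local Open Scope ring_scope.
Local Open Scope quotient_scope.

Lemma torsion_free_primitive_relation (A : zmodType) (p n : nat)
    (x : 'I_n -> A) (c : 'I_n -> int) :
  (1 < p)%N -> torsion_free A ->
  \sum_(i < n) x i *~ c i = 0 -> (exists i, c i != 0) ->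
  exists2 c' : 'I_n -> int,
    \sum_(i < n) x i *~ c' i = 0 & exists i, ~~ (p%:Z %| c' i)%Z.
Proof.
move=> p_gt1 tfA rel_c [i0 ci0_neq0].
pose d := \big[gcdn/0]_(i < n) `|c i|%N.
have d_dvd i : (d %| `|c i|)%N by apply: (biggcdn_inf i).
have d_gt0 : (0 < d)%N.
  rewrite lt0n; apply: contraNneq ci0_neq0 => d0.
  by have := d_dvd i0; rewrite d0 dvd0n absz_eq0.
pose c' i := (c i %/ d%:Z)%Z.
have c_eq i : c i = c' i * d%:Z by rewrite divzK // dvdzE.
exists c'.
  apply: (tfA _ d.-1); rewrite prednK // pmulrn mulrz_suml -[RHS]rel_c.
  by apply: eq_bigr => i _; rewrite -mulrzA -c_eq.
apply/existsP; rewrite -negb_forall; apply: contraL p_gt1 => /forallP p_dvd.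
have : (p * d %| d)%N.
  apply/dvdn_biggcdP => i _; rewrite c_eq abszM dvdn_mul //.
  by have := p_dvd i; rewrite dvdzE.
by move/(dvdn_leq d_gt0); rewrite -{2}[d]mul1n leq_pmul2r // -ltnNge ltnS.
Qed.

Lemma divisible_ptorsion (M : zmodType) (p k n : nat) (y : M) :
  prime p -> (forall (x : M) m, (0 < m)%N -> exists z, z *+ m = x) ->
  y *+ p ^ k = 0 -> (0 < n)%N -> exists2 z : M, z *+ n = y & exists l, z *+ p ^ l = 0.
Proof.
move=> p_prime M_div ypk n_gt0.
(* With n = p^e u, u prime to p and t u + v p^k = 1, take t z0 where p^e z0 = y. *)
pose u := (n`_p^')%N.
have n_eq : n = (p ^ logn p n * u)%N by rewrite -p_part partnC.
have [z0 z0pe] : exists z0, z0 *+ p ^ logn p n = y.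
  by apply: M_div; rewrite expn_gt0 prime_gt0.
have cop : coprime u (p ^ k).
  by rewrite coprime_sym (pnat_coprime _ (part_pnat _ _)) // pnatX pnat_id.
have [t [v bezout]] := Bezoutz u (p ^ k)%N.
have tu : t * u = 1 - v * (p ^ k)%N.
  by rewrite /gcdz /= (eqP cop) in bezout; rewrite -[1]bezout addrK.
exists (z0 *~ t); last first.
  exists (logn p n + k)%N; rewrite expnD pmulrn -mulrzA mulrC mulrzA PoszM.
  by rewrite mulrzA -!pmulrn z0pe ypk mul0rz.
rewrite pmulrn -mulrzA n_eq PoszM mulrCA mulrzA -pmulrn z0pe tu.
by rewrite mulrzBr mulr1z mulrC mulrzA -pmulrn ypk mul0rz subr0.
Qed.

Lemma pi_QZsum_eq0 (q : {poly rat}) : (\pi_QZsum q == 0) = (q \is a polyOver Num.int).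
Proof. by rewrite -(raddf0 \pi_QZsum) -Quotient.idealrBE subr0. Qed.

Lemma QZsum_divisible (y : QZsum) (n : nat) : (0 < n)%N -> exists z, z *+ n = y.
Proof.
move=> n_gt0; exists (\pi_QZsum (n%:R^-1 *: repr y)).
rewrite -raddfMn -scaler_nat scalerA divff ?scale1r; first exact: reprK.
by rewrite pnatr_eq0 -lt0n.
Qed.

Section Quasicyclic.
Variables (p : nat) (p_prime : prime p).
Local Notation D := (Zpinf_sum p).

Lemma Zpinf_sum_divisible (y : D) (n : nat) : (0 < n)%N -> exists z, z *+ n = y.
Proof.
move=> n_gt0; have /asboolP [k ypk] := valP y.
have [z zn [l zpl]] := divisible_ptorsion p_prime QZsum_divisible ypk n_gt0.
have z_tors : ptorsion_pred p z by apply/asboolP; exists l.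
by exists (ZpinfSum z_tors); apply: val_inj; rewrite (raddfMn \val).
Qed.

Lemma zpvalMz (x : D) (m : int) : zpval (x *~ m) = zpval x *~ m.
Proof. exact: (raddfMz \val). Qed.

Lemma natr_expp_neq0 k : ((p ^ k)%:R : rat) != 0.
Proof. by rewrite pnatr_eq0 -lt0n expn_gt0 prime_gt0. Qed.

Lemma zp_gen_tors i k : ptorsion_pred p (\pi_QZsum ((p ^ k)%:R^-1 *: 'X^i)).
Proof.
apply/asboolP; exists k; apply/eqP; rewrite -raddfMn pi_QZsum_eq0.
by rewrite -scaler_nat scalerA mulfV ?natr_expp_neq0 // scale1r polyOverXn.
Qed.

Definition zp_gen i k : D := ZpinfSum (zp_gen_tors i k).

Lemma Zpinf_sum_span (y : D) :
  exists k N (c : nat -> int), y = \sum_(i < N) zp_gen i k *~ c i.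
Proof.
have /asboolP [k ypk] := valP y; set q := repr (val y).
have q_int : q *+ p ^ k \is a polyOver Num.int.
  by rewrite -pi_QZsum_eq0 raddfMn /= reprK ypk.
have [c c_eq] := choice (fun i => intrP (polyOverP q_int i)).
exists k, (size q), c; apply: val_inj; rewrite (raddf_sum \val) /= -[LHS]reprK -/q.
under eq_bigr => i _ do rewrite zpvalMz /= -(raddfMz \pi_QZsum).
rewrite -(raddf_sum \pi_QZsum); congr (\pi_QZsum _).
rewrite -[LHS]coefK poly_def; apply: eq_bigr => i _; rewrite scalerMzl; congr (_ *: _).
by rewrite -mulrzl -c_eq coefMn -[_ *+ _]mulr_natr mulfK ?natr_expp_neq0.
Qed.

Lemma zp_gen_relation_dvd n k (c : 'I_n -> int) :
  \sum_(i < n) zp_gen i k *~ c i = 0 -> forall i, ((p ^ k)%:Z %| c i)%Z.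
Proof.
move=> /(congr1 val); rewrite (raddf_sum \val) raddf0 /=.
under eq_bigr => i _ do rewrite zpvalMz /= -(raddfMz \pi_QZsum).
rewrite -(raddf_sum \pi_QZsum) => /eqP; rewrite pi_QZsum_eq0 => /polyOverP rel_int i.
have := rel_int i; rewrite coef_sum (bigD1 i) //= big1 ?addr0; last first.
  move=> j j_neq_i; rewrite coefMrz coefZ coefXn eq_sym (inj_eq val_inj).
  by rewrite (negbTE j_neq_i) mulr0 mul0rz.
rewrite coefMrz coefZ coefXn eqxx mulr1 => /intrP [m m_eq]; apply/dvdzP; exists m.
apply: (@intr_inj rat); rewrite intrM -m_eq mulrzAl mulVf ?mul1rz //.
exact: natr_expp_neq0.
Qed.

End Quasicyclic.

Lemma Zpinf_sum_image_infinite_rank (A : zmodType) (p : nat) :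
  prime p -> torsion_free A -> has_Zpinf_sum_image A p -> infinite_rank A.
Proof.
move=> p_prime tfA [f f_onto] n.
have [a fa] := choice (fun i : 'I_n => f_onto (zp_gen p_prime i 1)).
exists a => c rel_c i; apply/eqP; apply: contraT => ci_neq0.
have [c' rel_c' [j pNdvd]] :=
  torsion_free_primitive_relation (prime_gt1 p_prime) tfA rel_c (ex_intro _ i ci_neq0).
have := congr1 f rel_c'; rewrite raddf0 raddf_sum.
under eq_bigr => k _ do rewrite raddfMz fa.
by move/zp_gen_relation_dvd/(_ j); rewrite expn1 (negbTE pNdvd).
Qed.

Lemma int_mx_rows_dependent m n (C : 'M[int]_(m, n)) : (n < m)%N ->
  exists2 e : 'I_m -> int,
    (exists i, e i != 0) & forall j, \sum_(i < m) e i * C i j = 0.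
Proof.
move=> n_lt_m; pose Cq := map_mx (intr : int -> rat) C.
have : kermx Cq != 0.
  by rewrite kermx_eq0; apply: contraTN n_lt_m => /eqP <-; rewrite -leqNgt rank_leq_col.
case/rowV0Pn => v /sub_kermxP vCq0 /rV0Pn [i0 vi0_neq0].
pose d : rat := \prod_i (denq (v 0 i))%:~R.
have d_neq0 : d != 0 by apply/prodf_neq0 => i _; rewrite intr_eq0 denq_neq0.
have vd_int i : v 0 i * d \is a Num.int.
  rewrite /d (bigD1 i) //= mulrA -numqE.
  by rewrite rpredM ?intr_int //; apply: rpred_prod => k _; exact: intr_int.
have [e e_eq] := choice (fun i => intrP (vd_int i)).
exists e.
  by exists i0; rewrite -(intr_eq0 rat) -e_eq mulf_neq0.
move=> j; apply: (@intr_inj rat); rewrite rmorph_sum rmorph0 /=.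
transitivity (d * (v *m Cq) 0 j); last by rewrite vCq0 mxE mulr0.
rewrite mxE mulr_sumr; apply: eq_bigr => i _.
by rewrite intrM -e_eq mxE mulrCA mulrA.
Qed.

Lemma span_multiples_dependent (A : zmodType) k m (x : 'I_k -> A) (y : 'I_m -> A)
    (r : 'I_m -> int) (C : 'M[int]_(m, k)) :
  (k < m)%N -> (forall j, r j != 0) ->
  (forall j, y j *~ r j = \sum_(i < k) x i *~ C j i) -> ~ zindependent y.
Proof.
move=> k_lt_m r_neq0 yr_eq y_indep.
have [e [j ej_neq0] eC0] := int_mx_rows_dependent C k_lt_m.
suff /(y_indep (fun j => e j * r j))/(_ j)/eqP : \sum_j y j *~ (e j * r j) = 0.
  by rewrite mulf_eq0 (negbTE ej_neq0) (negbTE (r_neq0 j)).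
transitivity (\sum_j \sum_i x i *~ (e j * C j i)).
  apply: eq_bigr => j' _; rewrite mulrC mulrzA yr_eq mulrz_suml.
  by apply: eq_bigr => i _; rewrite -mulrzA mulrC.
rewrite exchange_big /=; apply: big1 => i _.
by rewrite -mulrz_sumr eC0 mulr0z.
Qed.

Lemma infinite_rank_avoid_span (A : zmodType) (s : seq A) :
  infinite_rank A -> exists a : A, forall (r : int) (c : nat -> int),
    a *~ r = \sum_(i < size s) s`_i *~ c i -> r = 0.
Proof.
move=> rankA; apply: contrapT => /forallNP no_fresh.
have in_span (a : A) : exists rc : int * (nat -> int),
    rc.1 != 0 /\ a *~ rc.1 = \sum_(i < size s) s`_i *~ rc.2 i.
  have /existsNP [r /existsNP [c /not_implyP [ar_eq /eqP r_neq0]]] := no_fresh a.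
  by exists (r, c).
have [y y_indep] := rankA (size s).+1.
have [rc rc_spec] := choice (fun j => in_span (y j)).
apply: (span_multiples_dependent (x := fun i : 'I_(size s) => s`_i)
          (r := fun j => (rc j).1) (C := \matrix_(j, i) (rc j).2 i)
          (ltnSn _) _ _ y_indep).
  by move=> j; case: (rc_spec j).
by move=> j; case: (rc_spec j) => _ ->; apply: eq_bigr => i _; rewrite mxE.
Qed.

Section FreeSequence.
Variables (A : zmodType) (rankA : infinite_rank A).

Definition fresh (s : seq A) : A := projT1 (cid (infinite_rank_avoid_span s rankA)).

Fixpoint free_prefix n : seq A :=
  if n is n'.+1 then rcons (free_prefix n') (fresh (free_prefix n')) else [::].

Definition free_seq n : A := fresh (free_prefix n).

Lemma size_free_prefix n : size (free_prefix n) = n.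
Proof. by elim: n => //= n IHn; rewrite size_rcons IHn. Qed.

Lemma nth_free_prefix n i : (i < n)%N -> (free_prefix n)`_i = free_seq i.
Proof.
elim: n => // n IHn; rewrite ltnS leq_eqVlt => /predU1P [->|i_lt_n] /=.
  by rewrite nth_rcons size_free_prefix ltnn eqxx.
by rewrite nth_rcons size_free_prefix i_lt_n IHn.
Qed.

Lemma free_seq_fresh n (r : int) (c : nat -> int) :
  free_seq n *~ r = \sum_(i < n) free_seq i *~ c i -> r = 0.
Proof.
move=> rel; apply: (projT2 (cid (infinite_rank_avoid_span (free_prefix n) rankA)) r c).
rewrite [LHS]rel size_free_prefix.
by apply: eq_bigr => i _; rewrite nth_free_prefix.
Qed.

Lemma free_seq_free n (c : nat -> int) :
  \sum_(i < n) free_seq i *~ c i = 0 -> forall i, (i < n)%N -> c i = 0.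
Proof.
elim: n c => // n IHn c; rewrite big_ord_recr /= => rel.
have cn0 : c n = 0.
  apply: (free_seq_fresh (n := n) (c := fun i => - c i)).
  under eq_bigr do rewrite mulrNz.
  by rewrite sumrN; apply/eqP; rewrite -addr_eq0 addrC rel.
move: rel; rewrite cn0 mulr0z addr0 => /IHn c0 i.
by rewrite ltnS leq_eqVlt => /predU1P [->|/c0].
Qed.

End FreeSequence.

Lemma sum_mulrz_widen (M : zmodType) (F : nat -> M) (c : nat -> int) n N :
  (n <= N)%N ->
  \sum_(i < n) F i *~ c i = \sum_(i < N) F i *~ (if (i < n)%N then c i else 0).
Proof.
move=> n_le_N; rewrite (big_ord_widen N (fun i => F i *~ c i) n_le_N) big_mkcond /=.
by apply: eq_bigr => i _; case: ifP; rewrite ?mulr0z.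
Qed.

Section DivisibleExtension.
Local Open Scope classical_set_scope.
Variables (A D : zmodType).
Hypothesis D_divisible : forall (y : D) (n : nat), (0 < n)%N -> exists z, z *+ n = y.

Definition hom_graph (G : set (A * D)) : Prop :=
  [/\ G (0, 0), forall a e b f, G (a, e) -> G (b, f) -> G (a - b, e - f)
    & forall e, G (0, e) -> e = 0].

Section HomGraph.
Variables (G : set (A * D)) (G_graph : hom_graph G).

Lemma hom_graph0 : G (0, 0).
Proof. by case: G_graph. Qed.

Lemma hom_graphB a e b f : G (a, e) -> G (b, f) -> G (a - b, e - f).
Proof. by case: G_graph => _ GB _; apply: GB. Qed.

Lemma hom_graph_eq a e f : G (a, e) -> G (a, f) -> e = f.
Proof.
case: G_graph => _ GB G0 ae af; apply/eqP; rewrite -subr_eq0; apply/eqP/G0.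
by have := GB _ _ _ _ ae af; rewrite subrr.
Qed.

Lemma hom_graphN a e : G (a, e) -> G (- a, - e).
Proof.
by move=> ae; rewrite -[- a]sub0r -[- e]sub0r; apply: hom_graphB => //; apply: hom_graph0.
Qed.

Lemma hom_graphD a e b f : G (a, e) -> G (b, f) -> G (a + b, e + f).
Proof. by move=> ae /hom_graphN bf; rewrite -[b]opprK -[f]opprK; apply: hom_graphB. Qed.

Lemma hom_graphMz a e (k : int) : G (a, e) -> G (a *~ k, e *~ k).
Proof.
have GMn n : G (a, e) -> G (a *+ n, e *+ n).
  move=> ae; elim: n => [|n IHn]; first by rewrite !mulr0n; apply: hom_graph0.
  by rewrite !mulrS; apply: hom_graphD.
move=> ae; case: k => n; rewrite ?NegzE ?mulrNz -!pmulrn.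
  exact: GMn.
by apply: hom_graphN; apply: GMn.
Qed.

Lemma hom_graph_line a : exists d : D, forall (k : int) e, G (a *~ k, e) -> e = d *~ k.
Proof.
(* The n with a *+ n in the domain of G are the positive multiples of the least
   one, n; any n-th root of the value of G at a *+ n will do. *)
pose hit n := (0 < n)%N /\ exists e, G (a *+ n, e).
have [[n0 hit_n0]|no_hit] := pselect (exists n, hit n); last first.
  exists 0 => k e ake; rewrite mul0rz; have [k0|k_neq0] := eqVneq k 0.
    by apply: (hom_graph_eq ake); rewrite k0 mulr0z; apply: hom_graph0.
  exfalso; apply: no_hit; exists `|k|%N; split; first by rewrite absz_gt0.
  have [k_ge0|k_lt0] := lerP 0 k; first by exists e; rewrite pmulrn gez0_abs.
  by exists (- e); rewrite pmulrn ltz0_abs // mulrNz; apply: hom_graphN.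
have ex_hit : exists n, `[< hit n >] by exists n0; apply/asboolP.
case: (ex_minnP ex_hit) => n /asboolP [n_gt0 [en aen]] n_min.
have [d dn] := D_divisible en n_gt0.
exists d => k e ake.
pose q := (k %/ n)%Z; pose r := (k %% n)%Z.
have k_eq : k = q * n + r := divz_eq k n.
have ar : G (a *~ r, e - en *~ q).
  have := hom_graphB ake (hom_graphMz q aen).
  by rewrite pmulrn -mulrzA -mulrzBr [k in k - _]k_eq mulrC addrAC subrr add0r.
have r0 : r = 0.
  apply/eqP; apply: contraT => r_neq0.
  have r_ge0 : 0 <= r by apply: modz_ge0; rewrite eqz_nat -lt0n.
  have : (n <= `|r|)%N.
    apply: n_min; apply/asboolP; split; first by rewrite absz_gt0.
    by exists (e - en *~ q); rewrite pmulrn gez0_abs.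
  by rewrite leqNgt -ltz_nat gez0_abs // ltz_pmod.
have e_eq : e = en *~ q.
  apply/eqP; rewrite -subr_eq0; apply/eqP/(hom_graph_eq ar).
  by rewrite r0 mulr0z; apply: hom_graph0.
by rewrite e_eq -dn pmulrn -mulrzA k_eq r0 addr0 mulrC.
Qed.

Lemma hom_graph_extend a :
  exists2 G' : set (A * D), hom_graph G' & G `<=` G' /\ exists e, G' (a, e).
Proof.
have [d d_line] := hom_graph_line a.
pose G' u := exists s e (k : int), G (s, e) /\ u = (s + a *~ k, e + d *~ k).
exists G'; last split.
- split.
  + by exists 0, 0, 0; split; [apply: hom_graph0 | rewrite !mulr0z !addr0].
  + move=> _ _ _ _ [s1 [e1 [k1 [se1 [-> ->]]]]] [s2 [e2 [k2 [se2 [-> ->]]]]].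
    exists (s1 - s2), (e1 - e2), (k1 - k2); split; first exact: hom_graphB.
    by rewrite !mulrzBr !opprD (addrACA s1) (addrACA e1).
  + move=> _ [s [e [k [se [s_eq ->]]]]].
    have s_eq' : s = a *~ (- k) by rewrite mulrNz; apply/eqP; rewrite -addr_eq0 -s_eq.
    by move: se; rewrite s_eq' => /d_line ->; rewrite mulrNz addNr.
- by move=> [s e] se; exists s, e, 0; rewrite !mulr0z !addr0.
- exists d, 0, 0, 1; split; [exact: hom_graph0 | by rewrite !add0r !mulr1z].
Qed.

End HomGraph.

Lemma hom_graph_maximal (G0 : set (A * D)) : hom_graph G0 ->
  exists2 M : set (A * D), hom_graph M & G0 `<=` M /\ forall a, exists e, M (a, e).
Proof.
move=> G0_graph.
(* The alternative [M = set0] accounts for the union of the empty chain. *)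
pose P M := M = set0 \/ hom_graph M /\ G0 `<=` M.
have [M [PM M_max]] : exists M, P M /\ forall M', M `<` M' -> ~ P M'.
  apply: Zorn_bigcup => F FP F_chain.
  have [[X0 FX0 [u0 X0u0]]|F_empty] := pselect (exists2 X, F X & X !=set0); last first.
    left; apply/seteqP; split=> // u [X FX Xu].
    by apply: F_empty; exists X => //; exists u.
  have F_graph X u : F X -> X u -> hom_graph X /\ G0 `<=` X.
    by move=> FX Xu; case: (FP X FX) => // X_eq0; rewrite X_eq0 in Xu.
  have [[X0_0 _ _] G0X0] := F_graph X0 u0 FX0 X0u0.
  right; split; [split|].
  - by exists X0.
  - move=> a e b f [X1 FX1 X1ae] [X2 FX2 X2bf].
    have [X12|X21] := F_chain X1 X2 FX1 FX2.
      exists X2 => //; apply: (hom_graphB (F_graph X2 _ FX2 X2bf).1) => //.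
      exact: X12.
    exists X1 => //; apply: (hom_graphB (F_graph X1 _ FX1 X1ae).1) => //.
    exact: X21.
  - by move=> e [X FX Xe]; case: (F_graph X _ FX Xe) => -[_ _ X_fun] _; apply: X_fun.
  - by move=> u G0u; exists X0 => //; apply: G0X0.
have [M_graph G0M] : hom_graph M /\ G0 `<=` M.
  case: PM => [M0|//]; exfalso; apply: (M_max G0); last by right; split.
  by rewrite M0; split=> // /(_ _ (hom_graph0 G0_graph)).
exists M => //; split=> // a; apply: contrapT => /forallNP no_image.
have [M' M'_graph [MM' [e M'ae]]] := hom_graph_extend M_graph a.
apply: (M_max M'); last by right; split=> // u /G0M /MM'.
by split=> // /(_ _ M'ae) /no_image.
Qed.

Lemma hom_graph_additive (M : set (A * D)) : hom_graph M ->
  (forall a, exists e, M (a, e)) -> exists f : {additive A -> D}, forall a, M (a, f a).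
Proof.
move=> M_graph M_total; have [f Mf] := choice M_total.
have f_additive : zmod_morphism f.
  by move=> a b; apply: (hom_graph_eq M_graph (Mf (a - b))); apply: hom_graphB.
pose F : {additive A -> D} := HB.pack f (GRing.isZmodMorphism.Build A D f f_additive).
by exists F.
Qed.

Lemma hom_graph_extension (G0 : set (A * D)) : hom_graph G0 ->
  exists f : {additive A -> D}, forall a e, G0 (a, e) -> f a = e.
Proof.
move=> /hom_graph_maximal [M M_graph [G0M M_total]].
have [f Mf] := hom_graph_additive M_graph M_total.
by exists f => a e /G0M; apply: hom_graph_eq.
Qed.

Lemma free_seq_extension (x : nat -> A) (d : nat -> D) :
  (forall n (c : nat -> int),
     \sum_(i < n) x i *~ c i = 0 -> forall i, (i < n)%N -> c i = 0) ->
  exists f : {additive A -> D}, forall j, f (x j) = d j.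
Proof.
move=> x_free.
pose span u := exists n (c : nat -> int),
  u = (\sum_(i < n) x i *~ c i, \sum_(i < n) d i *~ c i).
have span_graph : hom_graph span.
  split.
  - by exists 0%N, (fun=> 0); rewrite !big_ord0.
  - move=> _ _ _ _ [n1 [c1 [-> ->]]] [n2 [c2 [-> ->]]].
    exists (n1 + n2)%N, (fun i => (if (i < n1)%N then c1 i else 0)
                                - (if (i < n2)%N then c2 i else 0)).
    rewrite !(sum_mulrz_widen _ c1 (leq_addr n2 n1)).
    rewrite !(sum_mulrz_widen _ c2 (leq_addl n1 n2)).
    by rewrite -!sumrB; congr pair; apply: eq_bigr => i _; rewrite mulrzBr.
  - move=> _ [n [c [/esym/x_free c0 ->]]].
    by rewrite big1 // => i _; rewrite c0 // mulr0z.
have [f f_span] := hom_graph_extension span_graph.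
exists f => j; apply: f_span; exists j.+1, (fun i => (i == j)%:Z).
have sum_delta (M : zmodType) (F : nat -> M) :
    \sum_(i < j.+1) F i *~ (i == j :> nat)%:Z = F j.
  rewrite big_ord_recr /= eqxx mulr1z big1 ?add0r // => i _.
  by rewrite ltn_eqF // mulr0z.
by rewrite !sum_delta.
Qed.

End DivisibleExtension.

Lemma infinite_rank_Zpinf_sum_image (A : zmodType) (p : nat) :
  prime p -> infinite_rank A -> has_Zpinf_sum_image A p.
Proof.
move=> p_prime rankA.
pose d j : Zpinf_sum p :=
  if (unpickle j : option (nat * nat)) is Some (i, k) then zp_gen p_prime i k else 0.
have [f f_free_seq] :=
  free_seq_extension (Zpinf_sum_divisible p_prime) d (free_seq_free (rankA := rankA)).
exists f => y; have [k [N [c ->]]] := Zpinf_sum_span p_prime y.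
exists (\sum_(i < N) free_seq rankA (pickle (i : nat, k)) *~ c i).
by rewrite raddf_sum; apply: eq_bigr => i _; rewrite raddfMz f_free_seq /d pickleK.
Qed.

Theorem proposition3p5 (A : zmodType) (p : nat) :
  prime p -> torsion_free A ->
  (has_Zpinf_sum_image A p <-> infinite_rank A).
Proof.
move=> p_prime tfA; split; first exact: Zpinf_sum_image_infinite_rank.
exact: infinite_rank_Zpinf_sum_image.
Qed.
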